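(* For an ideal $\mathcal{I}$ on $\omega$, the following are equivalent: (1) Player I does not have a winning strategy in the tallness* game with respect to $\mathcal{I}$; (2) for every sequence $\langle X_n:n\in\omega\rangle$ of elements of $\mathcal{I}^+$ there is $I\in\mathcal{I}$ such that $I\cap X_n$ is infinite for every $n\in\omega$.
   Context: Ideals on $\omega$ are assumed to contain all finite sets; $\mathcal{I}^+=\mathcal{P}(\omega)\setminus\mathcal{I}$. Tallness* game with respect to $\mathcal{I}$: at round $k$, Player I plays $n_k\in\omega$ with $n_0<n_1<\cdots$, then Player II plays $i_k\in\{0,1\}$. Player II wins iff either $\{n_k:k\in\omega\}\in\mathcal{I}$, or ($\{n_k:k\in\omega\}\in\mathcal{I}^+$ and $\{n_k:i_k=1\}$ is infinite and belongs to $\mathcal{I}$). *)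

From mathcomp Require Import all_boot.
Set Implicit Arguments. Unset Strict Implicit. Unset Printing Implicit Defensive.

Definition nset := nat -> Prop.

Definition subset_nat (A B : nset) : Prop := forall n, A n -> B n.

Definition finite_nat (A : nset) : Prop := exists m, forall n, A n -> n < m.
Definition infinite_nat (A : nset) : Prop := ~ finite_nat A.

Record is_ideal (I : nset -> Prop) : Prop := {
  ideal_fin   : forall A, finite_nat A -> I A;
  ideal_sub   : forall A B, I B -> subset_nat A B -> I A;
  ideal_union : forall A B, I A -> I B -> I (fun n => A n \/ B n);
  ideal_proper : ~ I (fun _ => True) }.

Definition positive (I : nset -> Prop) (X : nset) : Prop := ~ I X.

(* A strategy for Player I in the tallness* game: the k-th move of Player I
   as a function of the k previous moves of Player II. *)
Definition stratI := seq bool -> nat.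

Definition legal_stratI (sigma : stratI) : Prop :=
  forall (s : seq bool) (b : bool), sigma s < sigma (rcons s b).

Definition playI (sigma : stratI) (i : nat -> bool) (k : nat) : nat :=
  sigma (mkseq i k).

Definition played_set (sigma : stratI) (i : nat -> bool) : nset :=
  fun n => exists k, playI sigma i k = n.

Definition chosen_set (sigma : stratI) (i : nat -> bool) : nset :=
  fun n => exists k, i k = true /\ playI sigma i k = n.

Definition II_wins (I : nset -> Prop) (sigma : stratI) (i : nat -> bool) : Prop :=
  I (played_set sigma i) \/
  (positive I (played_set sigma i) /\
   infinite_nat (chosen_set sigma i) /\ I (chosen_set sigma i)).

Definition I_has_winning_strategy (I : nset -> Prop) : Prop :=
  exists sigma : stratI, legal_stratI sigma /\
    forall i : nat -> bool, ~ II_wins I sigma i.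

From mathcomp Require Import all_boot zify.
From Stdlib Require Import Classical ClassicalEpsilon.

(* (2) => (1).  Against a legal strategy sigma of Player I, the sets
   zero_tail s = {sigma (s ++ 0^j) : j} (the moves of I when II extends the
   position s by zeros) are I-positive if sigma wins: otherwise II wins by
   playing s and then zeros.  Enumerate these countably many sets, take J in
   I meeting each infinitely often and let II answer 1 exactly when I plays
   into J.  The chosen set lies in J and is infinite, so II wins.

   (1) => (2).  Given positive X_n with no such J, let Y_m = X_(log2 m), so
   every X_n is listed infinitely often.  Player I "chases" Y: his next move
   is the least element of Y_c above his last one, c being the number of 1s
   answered so far.  If II answers 1 finitely often, c stabilises at some m
   and the play covers a tail of Y_m, so it is positive.  If II answers 1
   infinitely often, every stage m is left by a 1 played inside Y_m; taking
   m large with log2 m = n, the chosen set meets each X_n infinitely often,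
   hence cannot be in I.  Either way II loses. *)

(* Classical decision of a proposition, needed to let players react to
   arbitrary (non-decidable) sets. *)
Definition decide (P : Prop) : bool :=
  if excluded_middle_informative P then true else false.

Lemma decideP (P : Prop) : reflect P (decide P).
Proof.
by rewrite /decide; case: excluded_middle_informative => h; constructor.
Qed.

Lemma infinite_natP (A : nset) :
  infinite_nat A <-> forall b, exists2 k, b <= k & A k.
Proof.
split=> [Ainf b | Aunb [m Am]].
- apply: NNPP => none; apply: Ainf; exists b => k Ak.
  by rewrite ltnNge; apply/negP => bk; apply: none; exists k.
- by have [k mk /Am] := Aunb m; rewrite ltnNge mk.
Qed.

Lemma logn2_preimage_unbounded (n M : nat) : exists2 m, M <= m & logn 2 m = n.
Proof.
exists (2 ^ n * (2 * M).+1).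
  apply: leq_trans (_ : (2 * M).+1 <= _); first by lia.
  by rewrite leq_pmull // expn_gt0.
rewrite lognM ?expn_gt0 // pfactorK // logn_coprime ?addn0 //.
by rewrite coprime2n /= mul2n odd_double.
Qed.

Section IdealFacts.
Context {I : nset -> Prop}.
Hypothesis hI : is_ideal I.

Lemma ideal_almost_sub {A B : nset} (N : nat) :
  I B -> (forall n, A n -> N <= n -> B n) -> I A.
Proof.
move=> IB AB; apply: (ideal_sub hI (B := fun n => B n \/ n < N)).
  by apply: (ideal_union hI) => //; apply: (ideal_fin hI); exists N.
by move=> n An; case: (leqP N n) => [/(AB n An)|]; [left | right].
Qed.

Lemma positive_infinite {X : nset} : positive I X -> infinite_nat X.
Proof. by move=> Xpos Xfin; apply: Xpos; apply: (ideal_fin hI). Qed.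

End IdealFacts.

(* The least element of A above m (or m + 1 if there is none). *)
Definition next_in (A : nset) (m : nat) : nat :=
  match excluded_middle_informative (exists k, decide (m < k /\ A k)) with
  | left ex => @ex_minn (fun k => decide (m < k /\ A k)) ex
  | right _ => m.+1
  end.

Lemma next_in_gt (A : nset) (m : nat) : m < next_in A m.
Proof.
rewrite /next_in; case: excluded_middle_informative => // ex.
by case: ex_minnP => k /decideP [].
Qed.

Lemma next_in_spec {A : nset} {m : nat} : (exists2 k, m < k & A k) ->
  A (next_in A m) /\ forall k, m < k -> A k -> next_in A m <= k.
Proof.
move=> [k mk Ak]; rewrite /next_in.
case: excluded_middle_informative => [ex | []]; last by exists k; apply/decideP.
case: ex_minnP => l /decideP [_ Al] least; split=> // j mj Aj.
by apply: least; apply/decideP.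
Qed.

Lemma next_in_orbit_covers (A : nset) (f : nat -> nat) (B : nat) :
  (forall m, exists2 k, m < k & A k) ->
  (forall k, B <= k -> f k.+1 = next_in A (f k)) ->
  forall x, A x -> f B < x -> exists k, f k = x.
Proof.
move=> Aunb fstep x Ax fBx.
suff orbit : forall d k, B <= k -> f k < x -> x - f k <= d -> exists k, f k = x.
  by apply: (orbit x B) => //; apply: leq_subr.
elim=> [|d IH] k Bk fkx dist; first by lia.
have fk_lt := next_in_gt A (f k); rewrite -fstep // in fk_lt.
have fk_le : f k.+1 <= x.
  by rewrite fstep //; apply: (proj2 (next_in_spec (Aunb (f k)))).
case: (ltnP (f k.+1) x) => [fkx' | xfk].
  by apply: (IH k.+1) => //; [apply: leqW | lia].
by exists k.+1; apply/eqP; rewrite eqn_leq fk_le.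
Qed.

Section Plays.
Variables (sigma : stratI) (i : nat -> bool).
Hypothesis legal : legal_stratI sigma.

Lemma playI_mono (k l : nat) : k < l -> playI sigma i k < playI sigma i l.
Proof.
elim: l => [//|l IH]; rewrite ltnS leq_eqVlt => /orP [/eqP -> | /IH lt_kl].
  by rewrite /playI mkseqS.
by apply: (ltn_trans lt_kl); rewrite /playI mkseqS.
Qed.

Lemma playI_ge (k : nat) : k <= playI sigma i k.
Proof.
elim: k => [//|k IH].
by apply: (leq_ltn_trans IH); apply: playI_mono.
Qed.

(* Since moves increase, the chosen set is infinite iff Player II answers 1
   infinitely often. *)
Lemma chosen_infiniteP :
  infinite_nat (chosen_set sigma i) <-> forall M, exists2 k, M <= k & i k.
Proof.
split=> [/infinite_natP Cinf M | often].
- have [x le_x [k [ik eq_x]]] := Cinf (playI sigma i M); subst x.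
  exists k => //; case: (ltnP k M) => // /playI_mono; lia.
- apply/infinite_natP => b; have [k bk ik] := often b.
  by exists (playI sigma i k); [apply: leq_trans (playI_ge k) | exists k].
Qed.

End Plays.

Lemma chosen_sub_played (sigma : stratI) (i : nat -> bool) :
  subset_nat (chosen_set sigma i) (played_set sigma i).
Proof. by move=> n [k [_ <-]]; exists k. Qed.

Section DefeatingAStrategy.
Variable I : nset -> Prop.
Hypothesis hI : is_ideal I.
Variable sigma : stratI.
Hypothesis legal : legal_stratI sigma.

Definition zero_tail (s : seq bool) : nset :=
  fun n => exists j, sigma (s ++ nseq j false) = n.

Lemma mkseq_pad (s : seq bool) (j : nat) :
  mkseq (nth false s) (size s + j) = s ++ nseq j false.
Proof.
elim: j => [|j IH]; first by rewrite addn0 cats0 mkseq_nth.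
rewrite addnS mkseqS IH nth_default ?leq_addr // rcons_cat.
by congr (_ ++ _); elim: j {IH} => //= j ->.
Qed.

(* If sigma wins, every zero tail is positive: otherwise Player II wins by
   playing s followed by zeros, as the play is almost contained in it. *)
Lemma zero_tail_positive (s : seq bool) :
  (forall i, ~ II_wins I sigma i) -> positive I (zero_tail s).
Proof.
move=> win Itail; apply: (win (nth false s)); left.
apply: (ideal_almost_sub hI (sigma s) Itail) => _ [k <-] sk.
have ks : size s <= k.
  rewrite leqNgt; apply/negP => /(playI_mono _ (nth false s) legal).
  by move: sk; rewrite /playI mkseq_nth; lia.
by exists (k - size s); rewrite -mkseq_pad subnKC.
Qed.

Variable J : nset.

Fixpoint answer_position (k : nat) : seq bool :=
  if k is k'.+1 then
    rcons (answer_position k') (decide (J (sigma (answer_position k'))))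
  else [::].

Definition answer (k : nat) : bool := decide (J (sigma (answer_position k))).

Lemma answer_play (k : nat) : playI sigma answer k = sigma (answer_position k).
Proof.
by rewrite /playI; congr sigma; elim: k => [//|k IH]; rewrite mkseqS IH.
Qed.

(* If J meets every zero tail, II answers 1 infinitely often: from any
   position, while II answers 0 the play follows a zero tail until it
   reaches J. *)
Lemma answer_often :
  (forall s, exists j, J (sigma (s ++ nseq j false))) ->
  forall M, exists2 k, M <= k & answer k.
Proof.
move=> meets M; have [j] := meets (answer_position M).
elim: j M => [|j IH] M hitJ.
  by exists M => //; apply/decideP; rewrite cats0 in hitJ.
case aM : (answer M); first by exists M.
have [k Mk ak] : exists2 k, M.+1 <= k & answer k.
  by apply: IH; move: hitJ; rewrite /= -/(answer M) aM cat_rcons.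
by exists k => //; apply: ltnW.
Qed.

Lemma answer_wins :
  I J -> (forall s, exists j, J (sigma (s ++ nseq j false))) ->
  II_wins I sigma answer.
Proof.
move=> IJ meets; have [played | pos] := classic (I (played_set sigma answer)).
  by left.
right; split=> //; split; first exact/(chosen_infiniteP _ _ legal)/answer_often.
apply: (ideal_sub hI IJ) => _ [k [ak <-]].
by rewrite answer_play; apply/decideP.
Qed.

End DefeatingAStrategy.

(* (2) => (1), contrapositively: a winning strategy for Player I yields a
   countable positive family that no set in I meets infinitely often in
   every member, namely an enumeration of its zero tails. *)
Lemma winning_strategy_bad_family {I : nset -> Prop} (hI : is_ideal I) :
  I_has_winning_strategy I ->
  exists X : nat -> nset, (forall n, positive I (X n)) /\
    forall J, I J -> exists n, finite_nat (fun m => J m /\ X n m).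
Proof.
move=> [sigma [legal win]].
(* Position codes are decoded with unpickle; junk codes get the full set. *)
exists (fun n =>
  if unpickle n is Some s then zero_tail sigma s else fun _ => True).
split=> [n | J IJ].
  case: unpickle => [s|]; last exact: (ideal_proper hI).
  exact: zero_tail_positive.
apply: NNPP => thick; apply: (win (answer sigma J)); apply: answer_wins => // s.
apply: NNPP => miss; apply: thick; exists (pickle s); exists 0 => m.
by rewrite pickleK => -[Jm [j eq_m]]; case: miss; exists j; rewrite eq_m.
Qed.

Section Counting.
Variable i : nat -> bool.

Definition ones (k : nat) : nat := count id (mkseq i k).

Lemma onesS (k : nat) : ones k.+1 = ones k + i k.
Proof. by rewrite /ones mkseqS -cats1 count_cat /= addn0. Qed.

Lemma ones_le (k : nat) : ones k <= k.
Proof.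
by rewrite /ones; apply: leq_trans (count_size _ _) _; rewrite size_mkseq.
Qed.

Lemma ones_mono : {homo ones : k l / k <= l}.
Proof.
move=> k l /subnKC <-; elim: (l - k) => [|d IH]; first by rewrite addn0.
by rewrite addnS onesS; apply: leq_trans IH (leq_addr _ _).
Qed.

(* If i takes the value 1 infinitely often, every count m is attained at some
   k where i k = 1: the counter grows without bound in steps of one. *)
Lemma ones_reach : (forall M, exists2 k, M <= k & i k) ->
  forall m, exists k, ones k = m /\ i k.
Proof.
move=> often m; suff [k mk] : exists k, m < ones k.
  elim: k mk => [//|k IH]; rewrite onesS => lt_m.
  case: (ltnP m (ones k)) => [/IH // | mk]; exists k.
  by move: lt_m mk; case: (i k) => lt_m mk; [split=> //; lia | exfalso; lia].
elim: m => [|m [k mk]].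
  by have [k _ ik] := often 0; exists k.+1; rewrite onesS ik addn1.
have [l kl il] := often k; exists l.+1; rewrite onesS il addn1 ltnS.
exact: leq_trans mk (ones_mono _ _ kl).
Qed.

End Counting.

Section ChasingStrategy.
Variable Y : nat -> nset.

Fixpoint chase_rev (r : seq bool) : nat :=
  if r is _ :: r' then next_in (Y (count id r)) (chase_rev r')
  else next_in (Y 0) 0.

Definition chase : stratI := fun s => chase_rev (rev s).

Lemma chase_rcons (s : seq bool) (b : bool) :
  chase (rcons s b) = next_in (Y (count id (rcons s b))) (chase s).
Proof.
by rewrite /chase rev_rcons /= count_rev -cats1 count_cat /= addn0 addnC.
Qed.

Lemma chase_legal : legal_stratI chase.
Proof. by move=> s b; rewrite chase_rcons next_in_gt. Qed.

Hypothesis Y_unbounded : forall m b, exists2 k, b < k & Y m k.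

Variable i : nat -> bool.

Lemma chase_step (k : nat) :
  playI chase i k.+1 = next_in (Y (ones i k.+1)) (playI chase i k).
Proof. by rewrite /playI /ones mkseqS chase_rcons. Qed.

Lemma chase_in_Y (k : nat) : Y (ones i k) (playI chase i k).
Proof.
case: k => [|k]; first exact: (proj1 (next_in_spec (Y_unbounded 0 0))).
by rewrite chase_step; apply: (proj1 (next_in_spec (Y_unbounded _ _))).
Qed.

Lemma chase_covers_tail (B : nat) : (forall k, B <= k -> i k = false) ->
  forall x, Y (ones i B) x -> playI chase i B < x -> played_set chase i x.
Proof.
move=> zeros; apply: next_in_orbit_covers => // k Bk.
rewrite chase_step; congr (next_in (Y _) _).
elim: k Bk => [|k IH] Bk; rewrite onesS zeros // addn0.
  by move: Bk; rewrite leqn0 => /eqP ->.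
by move: Bk; rewrite leq_eqVlt => /orP [/eqP -> // | /IH].
Qed.

End ChasingStrategy.

Section BadFamilyStrategy.
Variable I : nset -> Prop.
Hypothesis hI : is_ideal I.
Variable X : nat -> nset.
Hypothesis X_positive : forall n, positive I (X n).
Hypothesis thin : forall J, I J -> exists n, finite_nat (fun m => J m /\ X n m).

(* The family listing every X_n infinitely often. *)
Definition Xlisted (m : nat) : nset := X (logn 2 m).

Lemma Xlisted_unbounded (m b : nat) : exists2 k, b < k & Xlisted m k.
Proof.
have /infinite_natP unbounded := positive_infinite hI (X_positive (logn 2 m)).
exact: unbounded b.+1.
Qed.

Variable i : nat -> bool.
Let sigma := chase Xlisted.

(* Finitely many 1s: the play covers a tail of some X_n, so it is positive. *)
Lemma chase_played_positive :
  ~ infinite_nat (chosen_set sigma i) -> positive I (played_set sigma i).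
Proof.
move=> Cfin.
have [B zeros] : exists B, forall k, B <= k -> i k = false.
  apply: NNPP => no; apply/Cfin/(chosen_infiniteP _ _ (chase_legal _)) => M.
  apply: NNPP => none; apply: no; exists M => k Mk.
  by apply/negbTE/negP => ik; apply: none; exists k.
move=> Iplayed; apply: (X_positive (logn 2 (ones i B))).
apply: (ideal_almost_sub hI (playI sigma i B).+1 Iplayed) => x Xx.
exact: (chase_covers_tail _ Xlisted_unbounded _ _ zeros _ Xx).
Qed.

(* Infinitely many 1s: the chosen set meets every X_n beyond any bound, so
   it is not in I. *)
Lemma chase_chosen_positive :
  infinite_nat (chosen_set sigma i) -> positive I (chosen_set sigma i).
Proof.
move=> /(chosen_infiniteP _ _ (chase_legal _)) often IC.
have [n [B finB]] := thin _ IC.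
have [m Bm logm] := logn2_preimage_unbounded n B.
have [k [km ik]] := ones_reach _ often m.
have inX : X n (playI sigma i k).
  by rewrite -logm -km; exact: (chase_in_Y _ Xlisted_unbounded).
have := finB _ (conj (ex_intro _ k (conj ik erefl)) inX).
have k_le : k <= playI sigma i k := playI_ge _ i (chase_legal Xlisted) k.
by have := ones_le i k; lia.
Qed.

Lemma chase_beats_II : ~ II_wins I sigma i.
Proof.
have [Cinf | Cfin] := classic (infinite_nat (chosen_set sigma i)).
  move=> [Iplayed | [_ [_ IC]]]; apply: (chase_chosen_positive Cinf) => //.
  exact: (ideal_sub hI Iplayed (chosen_sub_played _ _)).
move=> [Iplayed | [_ [Cinf _]]]; last exact: Cfin Cinf.
exact: chase_played_positive Cfin Iplayed.
Qed.

End BadFamilyStrategy.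

Lemma bad_family_winning_strategy {I : nset -> Prop} (hI : is_ideal I)
    {X : nat -> nset} : (forall n, positive I (X n)) ->
  (forall J, I J -> exists n, finite_nat (fun m => J m /\ X n m)) ->
  I_has_winning_strategy I.
Proof.
move=> Xpos thin; exists (chase (Xlisted X)); split; first exact: chase_legal.
exact: chase_beats_II.
Qed.

Theorem mainTheorem15 (I : nset -> Prop) (hI : is_ideal I) :
  ~ I_has_winning_strategy I <->
  (forall X : nat -> nset, (forall n, positive I (X n)) ->
     exists J : nset, I J /\
       forall n, infinite_nat (fun m => J m /\ X n m)).
Proof.
split=> [noWin X Xpos | family win].
- apply: NNPP => nofam; apply: noWin.
  apply: (bad_family_winning_strategy hI Xpos).
  move=> J IJ; apply: NNPP => thick; apply: nofam; exists J; split=> // n fin.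
  by apply: thick; exists n.
- have [X [Xpos thin]] := winning_strategy_bad_family hI win.
  have [J [IJ meets]] := family X Xpos.
  by have [n fin] := thin J IJ; apply: meets fin.
Qed.
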